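(* Let $0<\varepsilon,\delta\le 1$ and let $V_A,V_S$ be finite sets. There exists a constant $C>0$, depending only on $\mathrm{card}(V_A)$, $\mathrm{card}(V_S)$, $\varepsilon$ and $\delta$, such that the following holds. Let $(X,m)$ be a measure space with $m(X)=1$, and let $[[\cdot]],[[\cdot]]'\colon V_A\cup V_S\to\mathfrak{M}$ be two $\varepsilon$-granular data maps such that $\mathcal{S}_\delta([[\cdot]])=\mathcal{S}_\delta([[\cdot]]')$. Then \[ \textsf{barcode-dist}\big(\mathcal{F}_\delta([[\cdot]]),\mathcal{F}_\delta([[\cdot]]')\big)\le C\cdot \textsf{data-dist}([[\cdot]],[[\cdot]]'). \]
   Context: $(X,m)$ is a measure space with $m(X)=1$ and $\mathfrak{M}$ is the set of its measurable subsets. $V_A$ and $V_S$ are finite sets. A data map is any map $[[\cdot]]\colon V_A\cup V_S\to\mathfrak{M}$; it is $\varepsilon$-granular if $m([[v]])>\varepsilon$ for every $v\in V_A\cup V_S$. A sequent $\Gamma\vdash\Delta$ is a pair $(\Gamma,\Delta)$ with $\Gamma\subseteq V_A$, $\Delta\subseteq V_S$; the set $\mathcal{S}$ of all sequents is partially ordered by $(\Gamma\vdash\Delta)\preceq(\Gamma'\vdash\Delta')$ iff $\Gamma\subseteq\Gamma'$ and $\Delta\subseteq\Delta'$. For a data map write $A_\Gamma=\bigcap_{a\in\Gamma}[[a]]$ (equal to $X$ if $\Gamma=\emptyset$) and $U_\Delta=\bigcup_{x\in\Delta}[[x]]$ (equal to $\emptyset$ if $\Delta=\emptyset$). For $t\in[0,1]$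 let \[\mathcal{S}'_t([[\cdot]])=\{(\Gamma\vdash\Delta)\in\mathcal{S} : m(A_\Gamma\cap U_\Delta)/m(A_\Gamma)\ge 1-t\}.\] These subposets increase with $t$ and $\mathcal{S}'_1([[\cdot]])=\mathcal{S}$. For $0\le\delta\le1$ let $\mathcal{S}_\delta([[\cdot]])$ be the set of sequents $\Gamma\vdash\Delta$ with $m(A_\Gamma)/m([[a]])>\delta$ for every $a\in\Gamma$. Let $\mathcal{F}_\delta([[\cdot]])$ be the filtration $(\mathcal{S}'_t([[\cdot]])\cap\mathcal{S}_\delta([[\cdot]]))_{t\in[0,1]}$ of the poset $\mathcal{S}_\delta([[\cdot]])$, where each member carries the induced order. For a filtration $\mathcal{F}=(P_t)_{t\in[0,1]}$ of a finite poset $P$ (meaning $P_t\subseteq P_{t'}$ for $t\le t'$, with $P_1=P$), and for $p\in P$, set $I_p(\mathcal{F})=\{t\in[0,1]: p \text{ is a minimal element of } P_t\}$. For two filtrations $\mathcal{F},\mathcal{F}'$ of the same poset $P$, \[\textsf{barcode-dist}(\mathcal{F},\mathcal{F}')=\sum_{p\in P}|I_p(\mathcal{F})\,\triangle\, I_p(\mathcal{F}')|,\] where $\triangle$ denotes symmetric difference and $|\cdot|$ denotes Lebesgue measure. For two data maps, \[\textsf{data-dist}([[\cdot]],[[\cdot]]')=\sum_{v\in V_A\cup V_S} m([[v]]\triangle[[v]]').\] *)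

From HB Require Import structures.
From mathcomp Require Import all_boot all_order all_algebra.
From mathcomp Require Import all_classical all_reals all_analysis.
Set Implicit Arguments. Unset Strict Implicit. Unset Printing Implicit Defensive.
Import Order.TTheory GRing.Theory Num.Theory.
Local Open Scope classical_set_scope.
Local Open Scope ring_scope.

Section Sequents.
Variables (R : realType) (VA VS : finType).
Variables (d : measure_display) (T : measurableType d).

Definition sequent := ({set VA} * {set VS})%type.

Definition seq_le (p q : sequent) : bool := (p.1 \subset q.1) && (p.2 \subset q.2).
Definition seq_lt (p q : sequent) : bool := seq_le p q && (p != q).

(* a data map on V_A ∪ V_S (disjoint union) *)
Variable mu : {measure set T -> \bar R}.
Variable D : (VA + VS)%type -> set T.

Definition granular (eps : R) : Prop := forall v, (eps%:E < mu (D v))%E.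

Definition A_ (G : {set VA}) : set T := [set x | forall a, a \in G -> D (inl a) x].
Definition U_ (De : {set VS}) : set T := [set x | exists2 s, s \in De & D (inr s) x].

(* m(A_Γ ∩ U_Δ) / m(A_Γ) (measures are finite since m(X)=1) *)
Definition ratio (p : sequent) : R :=
  fine (mu (A_ p.1 `&` U_ p.2)) / fine (mu (A_ p.1)).

Definition inSprime (t : R) (p : sequent) : bool := 1 - t <= ratio p.

Definition inSdelta (delta : R) (p : sequent) : bool :=
  [forall a, (a \in p.1) ==> (delta < fine (mu (A_ p.1)) / fine (mu (D (inl a)))) ].

Definition Fdelta (delta t : R) (p : sequent) : bool :=
  inSprime t p && inSdelta delta p.

Definition is_minimal (delta t : R) (p : sequent) : Prop :=
  Fdelta delta t p /\ forall q : sequent, Fdelta delta t q -> ~~ seq_lt q p.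

Definition Ip (delta : R) (p : sequent) : set R :=
  [set t | 0 <= t <= 1 /\ is_minimal delta t p].

End Sequents.

Definition symdiff (U : Type) (A B : set U) : set U := (A `\` B) `|` (B `\` A).

(* barcode-dist(F_delta(D), F_delta(D')), summing over the common poset S_delta(D) *)
Definition barcode_dist (R : realType) (VA VS : finType) (d : measure_display)
  (T : measurableType d) (mu : {measure set T -> \bar R})
  (D D' : (VA + VS)%type -> set T) (delta : R) : \bar R :=
  (\sum_(p : sequent VA VS | inSdelta mu D delta p)
     lebesgue_measure (symdiff (Ip mu D delta p) (Ip mu D' delta p)))%E.

Definition data_dist (R : realType) (VA VS : finType) (d : measure_display)
  (T : measurableType d) (mu : {measure set T -> \bar R})
  (D D' : (VA + VS)%type -> set T) : \bar R :=
  (\sum_(v : (VA + VS)%type) mu (symdiff (D v) (D' v)))%E.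

From Pilot Require Import Defs.
From HB Require Import structures.
From mathcomp Require Import all_boot all_order all_algebra.
From mathcomp Require Import all_classical all_reals all_analysis.
From mathcomp Require Import ring lra.
Import Order.TTheory GRing.Theory Num.Theory.
Local Open Scope classical_set_scope.
Local Open Scope ring_scope.
Set Implicit Arguments. Unset Strict Implicit.

(* Every ratio m(A_Γ ∩ U_Δ)/m(A_Γ) is built from sets that depend pointwise on
   the data map, so numerator and denominator each move by at most data-dist;
   as m(A_Γ) >= δε on S_δ, each ratio is (2/(δε))-Lipschitz in data-dist.
   If p is minimal at time t for one filtration but not for the other, some
   q of S_δ lies in one member at time t and not in the other, i.e. 1 - t lies
   between the two ratios of q.  Hence I_p Δ I'_p is covered by intervals of
   lengths |ratio q - ratio' q|, and summing over p and q gives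
   C = 2 N^2/(δε), with N the number of sequents. *)

Lemma card_sequent (VA VS : finType) :
  #|{: sequent VA VS}| = (2 ^ #|VA| * 2 ^ #|VS|)%N.
Proof.
have card_set (V : finType) : #|{: {set V}}| = (2 ^ #|V|)%N.
  rewrite -cardsT -card_powerset; apply: eq_card => S.
  by rewrite powersetE !inE; apply/esym/fintype.subsetP => x; rewrite inE.
by rewrite card_prod !card_set.
Qed.

Lemma mem_bigsetU (I : finType) (U : Type) (P : pred I) (F : I -> set U) i x :
  P i -> F i x -> (\big[setU/set0]_(j | P j) F j) x.
Proof. by move=> Pi Fix; rewrite (bigD1 i) //=; left. Qed.

Lemma lebesgue_measure_le (R : realType) (A B : set R) :
  A `<=` B -> (lebesgue_measure A <= lebesgue_measure B)%E.
Proof.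
move=> AB; rewrite /lebesgue_measure /lebesgue_stieltjes_measure /measure_extension.
exact: le_outer_measure.
Qed.

Lemma sume_cst_le (R : realType) (I : finType) (P : pred I) (k : R) : 0 <= k ->
  (\sum_(i | P i) k%:E <= (#|I|%:R * k)%:E)%E.
Proof.
move=> k0; rewrite sumEFin lee_fin big_mkcond /=.
apply: (@le_trans _ _ (\sum_(i : I) k)); first by apply: ler_sum => i _; case: (P i).
by rewrite sumr_const mulr_natl.
Qed.

Lemma dist_div_le (R : realFieldType) (x y x' y' c e : R) :
  0 < c -> c <= y -> c <= y' -> 0 <= x' <= y' ->
  `|x - x'| <= e -> `|y - y'| <= e -> `|x / y - x' / y'| <= (e + e) / c.
Proof.
move=> c0 cy cy' /andP[x'0 x'y'] dx dy.
have y0 : 0 < y by apply: lt_le_trans cy.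
have y'0 : 0 < y' by apply: lt_le_trans cy'.
have div_le a : 0 <= a <= e -> a / y <= e / c.
  case/andP=> a0 ae; apply: ler_pM => //; first by rewrite invr_ge0 ltW.
  by rewrite lef_pV2 // ?posrE.
have q01 : 0 <= x' / y' <= 1.
  by rewrite divr_ge0 ?(ltW y'0) //= ler_pdivrMr // mul1r.
have -> : x / y - x' / y' = (x - x') / y + x' / y' * ((y' - y) / y).
  by field; rewrite ?gt_eqF.
rewrite [(e + e) / c]mulrDl; apply: (le_trans (ler_normD _ _)); apply: lerD.
  by rewrite normrM normfV (gtr0_norm y0) div_le // normr_ge0.
case/andP: q01 => q0 q1; rewrite normrM (ger0_norm q0) -[e / c]mul1r.
apply: ler_pM => //.
by rewrite normrM normfV (gtr0_norm y0) div_le // normr_ge0 distrC dy.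
Qed.

Lemma measurable_symdiff d (T : measurableType d) (A B : set T) :
  measurable A -> measurable B -> measurable (symdiff A B).
Proof. by move=> mA mB; apply: measurableU; apply: measurableD. Qed.

Section ProbabilityMeasure.
Context d (T : measurableType d) (R : realType) (mu : {measure set T -> \bar R}).

Lemma measure_bigsetU_le (I : Type) (r : seq I) (P : pred I) (F : I -> set T) :
  (forall i, measurable (F i)) ->
  (mu (\big[setU/set0]_(i <- r | P i) F i) <= \sum_(i <- r | P i) mu (F i))%E.
Proof.
move=> mF; elim: r => [|i r IH]; first by rewrite !big_nil measure0.
rewrite !big_cons; case: (P i) => //.
apply: (le_trans (measureU2 _ _ _)) => //; first exact: bigsetU_measurable.
exact: leeD.
Qed.

Hypothesis mu1 : mu setT = 1%E.

Lemma fine_measureK (A : set T) : measurable A -> (fine (mu A))%:E = mu A.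
Proof.
move=> mA; apply: fineK; rewrite ge0_fin_numE //.
by apply: (@le_lt_trans _ _ (mu setT)); [rewrite le_measure ?inE | rewrite mu1 ltry].
Qed.

Lemma dist_fine_measure_le (A B : set T) : measurable A -> measurable B ->
  `|fine (mu A) - fine (mu B)| <= fine (mu (symdiff A B)).
Proof.
have le_add_symdiff X Y : measurable X -> measurable Y ->
    fine (mu X) <= fine (mu Y) + fine (mu (symdiff X Y)).
  move=> mX mY; have mXY := measurable_symdiff mX mY.
  rewrite -lee_fin EFinD !fine_measureK //.
  apply: (@le_trans _ _ (mu (Y `|` symdiff X Y))); last exact: measureU2.
  apply: le_measure; rewrite ?inE //; first exact: measurableU.
  by move=> x Xx; case: (pselect (Y x)) => Yx; [left | right; left].
move=> mA mB; have := le_add_symdiff _ _ mA mB; have := le_add_symdiff _ _ mB mA.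
rewrite /symdiff setUC ler_norml => ? ?; apply/andP; split; lra.
Qed.

End ProbabilityMeasure.

Section DataMaps.
Context (R : realType) (VA VS : finType) d (T : measurableType d).
Context (mu : {measure set T -> \bar R}).
Local Notation datamap := ((VA + VS)%type -> set T).

Lemma measurable_A_ (D : datamap) G :
  (forall v, measurable (D v)) -> measurable (A_ D G).
Proof.
move=> mD; have -> : A_ D G = \bigcap_(a in [set a | a \in G]) D (inl a) by [].
by apply: fin_bigcap_measurable => //; exact: finite_finset.
Qed.

Lemma measurable_U_ (D : datamap) De :
  (forall v, measurable (D v)) -> measurable (U_ D De).
Proof.
move=> mD; have -> : U_ D De = \bigcup_(s in [set s | s \in De]) D (inr s) by [].
by apply: fin_bigcup_measurable => //; exact: finite_finset.
Qed.

Lemma symdiff_sub_data (S : datamap -> set T) (D D' : datamap) :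
  (forall x, (forall v, D v x <-> D' v x) -> (S D x <-> S D' x)) ->
  symdiff (S D) (S D') `<=` \big[setU/set0]_v symdiff (D v) (D' v).
Proof.
move=> S_pointwise x Sx; apply: contrapT => notin.
have same v : D v x <-> D' v x.
  split=> h; apply: contrapT => h'; apply: notin.
    by apply: (@mem_bigsetU _ _ xpredT _ v) => //; left.
  by apply: (@mem_bigsetU _ _ xpredT _ v) => //; right.
by move: Sx (S_pointwise x same) => [[Sx nSx] | [Sx nSx]] [h1 h2];
  [apply: nSx; exact: h1 | apply: nSx; exact: h2].
Qed.

Hypothesis mu1 : mu setT = 1%E.
Variables D D' : datamap.
Hypotheses (mD : forall v, measurable (D v)) (mD' : forall v, measurable (D' v)).

Lemma data_dist_fine : data_dist mu D D' = (fine (data_dist mu D D'))%:E.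
Proof.
rewrite fineK // /data_dist -EFin_sum_fine // => v _.
by rewrite -(fine_measureK mu1) //; exact: measurable_symdiff.
Qed.

Lemma dist_fine_measure_le_data_dist (S : datamap -> set T) :
  measurable (S D) -> measurable (S D') ->
  (forall x, (forall v, D v x <-> D' v x) -> (S D x <-> S D' x)) ->
  `|fine (mu (S D)) - fine (mu (S D'))| <= fine (data_dist mu D D').
Proof.
move=> mS mS' S_pointwise; apply: (le_trans (dist_fine_measure_le mu1 mS mS')).
have mSS' := measurable_symdiff mS mS'.
rewrite -lee_fin (fine_measureK mu1) // -data_dist_fine.
apply: (@le_trans _ _ (mu (\big[setU/set0]_v symdiff (D v) (D' v)))).
  apply: le_measure; rewrite ?inE //; last exact: symdiff_sub_data.
  by apply: bigsetU_measurable => v _; exact: measurable_symdiff.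
by apply: measure_bigsetU_le => v; exact: measurable_symdiff.
Qed.

Lemma measure_A_ge (E : datamap) (eps delta : R) (p : sequent VA VS) :
  0 < eps <= 1 -> 0 < delta <= 1 -> (forall v, measurable (E v)) ->
  granular mu E eps -> inSdelta mu E delta p ->
  delta * eps <= fine (mu (A_ E p.1)).
Proof.
move=> /andP[e0 e1] /andP[d0 d1] mE gE Sp.
have [a Ha | p1_0] := pickP (fun a => a \in p.1).
  move: Sp => /forallP/(_ a)/implyP/(_ Ha).
  have ea : eps < fine (mu (E (inl a))).
    by rewrite -lte_fin (fine_measureK mu1 (mE _)); exact: gE.
  rewrite ltr_pdivlMr ?(lt_trans e0) // => /ltW; apply: le_trans.
  by rewrite ler_wpM2l ?ltW.
have -> : A_ E p.1 = setT by rewrite predeqE => x; split=> // _ a; rewrite p1_0.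
by rewrite mu1 /=; apply: mulr_ile1 => //; exact: ltW.
Qed.

Lemma dist_ratio_le (eps delta : R) (p : sequent VA VS) :
  0 < eps <= 1 -> 0 < delta <= 1 -> granular mu D eps -> granular mu D' eps ->
  inSdelta mu D delta p -> inSdelta mu D' delta p ->
  `|Defs.ratio mu D p - Defs.ratio mu D' p| <=
    (fine (data_dist mu D D') + fine (data_dist mu D D')) / (delta * eps).
Proof.
move=> he hd gD gD' Sp Sp'.
have [e0 d0] : 0 < eps /\ 0 < delta by case/andP: he; case/andP: hd.
have mAU (E : datamap) : (forall v, measurable (E v)) ->
    measurable (A_ E p.1 `&` U_ E p.2).
  by move=> mE; apply: measurableI; [exact: measurable_A_ | exact: measurable_U_].
apply: dist_div_le; first exact: mulr_gt0.
- exact: measure_A_ge gD Sp.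
- exact: measure_A_ge gD' Sp'.
- rewrite fine_ge0 ?measure_ge0 //= -lee_fin (fine_measureK mu1 (mAU _ mD')).
  rewrite (fine_measureK mu1 (measurable_A_ _ mD')).
  by apply: le_measure; rewrite ?inE; [exact: mAU | exact: measurable_A_ | exact: subIsetl].
- apply: (@dist_fine_measure_le_data_dist (fun E => A_ E p.1 `&` U_ E p.2)).
  + exact: mAU.
  + exact: mAU.
  move=> x same; split=> -[hA [s Hs Hx]].
    by split; [move=> a Ha; apply/same; exact: hA | exists s => //; apply/same].
  by split; [move=> a Ha; apply/same; exact: hA | exists s => //; apply/same].
- apply: (@dist_fine_measure_le_data_dist (fun E => A_ E p.1)).
  + exact: measurable_A_.
  + exact: measurable_A_.
  by move=> x same; split=> hA a Ha; apply/same; exact: hA.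
Qed.

End DataMaps.

Section Filtrations.
Context (R : realType) (VA VS : finType) d (T : measurableType d).
Context (mu : {measure set T -> \bar R}) (delta : R).
Local Notation datamap := ((VA + VS)%type -> set T).

(* Up to its endpoints, the set of times t at which q belongs to exactly one
   of the two members S'_t. *)
Definition ratio_window (D1 D2 : datamap) (q : sequent VA VS) : set R :=
  [set` `[1 - Num.max (Defs.ratio mu D1 q) (Defs.ratio mu D2 q),
          1 - Num.min (Defs.ratio mu D1 q) (Defs.ratio mu D2 q)]].

Lemma ratio_windowC (D1 D2 : datamap) q : ratio_window D1 D2 q = ratio_window D2 D1 q.
Proof. by rewrite /ratio_window maxC minC. Qed.

Lemma lebesgue_ratio_window (D1 D2 : datamap) q :
  (lebesgue_measure (ratio_window D1 D2 q) <=
    `|Defs.ratio mu D1 q - Defs.ratio mu D2 q|%:E)%E.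
Proof.
rewrite lebesgue_measure_itv /=; case: ifPn => _; last by rewrite lee_fin.
rewrite -EFinB lee_fin.
by case: (leP (Defs.ratio mu D1 q) (Defs.ratio mu D2 q)) => h;
  [rewrite distrC | ]; apply: le_trans (ler_norm _); lra.
Qed.

Lemma Ip_setD_window (D1 D2 : datamap) p t :
  (forall q, inSdelta mu D1 delta q = inSdelta mu D2 delta q) ->
  Ip mu D1 delta p t -> ~ Ip mu D2 delta p t ->
  exists2 q, inSdelta mu D1 delta q & ratio_window D1 D2 q t.
Proof.
move=> HS [t01 [/andP[Fp Sp] minp]] notIp2; rewrite /inSprime in Fp.
have window q : Num.min (Defs.ratio mu D1 q) (Defs.ratio mu D2 q) <= 1 - t <=
                Num.max (Defs.ratio mu D1 q) (Defs.ratio mu D2 q) ->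
    ratio_window D1 D2 q t.
  by move=> /andP[? ?]; rewrite /ratio_window /= in_itv /=; apply/andP; split; lra.
have [F2p | nF2p] := boolP (Fdelta mu D2 delta t p); last first.
  move: nF2p; rewrite /Fdelta -HS Sp andbT /inSprime -ltNge => lt2.
  by exists p => //; apply: window; rewrite ge_min (ltW lt2) orbT le_max Fp.
have [q /andP[/andP[F2q S2q] ltqp]] : exists q, Fdelta mu D2 delta t q && seq_lt q p.
  apply: contrapT => noq; apply: notIp2; split=> //; split=> // q F2q.
  by apply/negP => ltqp; apply: noq; exists q; rewrite F2q.
have S1q : inSdelta mu D1 delta q by rewrite HS.
rewrite /inSprime in F2q.
have : ~~ Fdelta mu D1 delta t q by apply/negP => /minp; rewrite ltqp.
rewrite /Fdelta S1q andbT /inSprime -ltNge => lt1.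
by exists q => //; apply: window; rewrite ge_min (ltW lt1) le_max F2q orbT.
Qed.

Lemma Ip_symdiff_sub (D1 D2 : datamap) p :
  (forall q, inSdelta mu D1 delta q = inSdelta mu D2 delta q) ->
  symdiff (Ip mu D1 delta p) (Ip mu D2 delta p) `<=`
    \big[setU/set0]_(q | inSdelta mu D1 delta q) ratio_window D1 D2 q.
Proof.
move=> HS t [[I1 nI2] | [I2 nI1]].
  by have [q Sq Wq] := Ip_setD_window HS I1 nI2; exact: mem_bigsetU Sq Wq.
have [q Sq Wq] := Ip_setD_window (fun q => esym (HS q)) I2 nI1.
by apply: (mem_bigsetU (i := q)); rewrite ?HS // ratio_windowC.
Qed.

Lemma lebesgue_Ip_symdiff_le (D1 D2 : datamap) p :
  (forall q, inSdelta mu D1 delta q = inSdelta mu D2 delta q) ->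
  (lebesgue_measure (symdiff (Ip mu D1 delta p) (Ip mu D2 delta p)) <=
    \sum_(q | inSdelta mu D1 delta q)
      `|Defs.ratio mu D1 q - Defs.ratio mu D2 q|%:E)%E.
Proof.
move=> HS; apply: le_trans (lebesgue_measure_le (Ip_symdiff_sub (p := p) HS)) _.
apply: le_trans; first by apply: measure_bigsetU_le => q; exact: measurable_itv.
by apply: lee_sum => q _; exact: lebesgue_ratio_window.
Qed.

End Filtrations.

Theorem mainTheorem1 (R : realType) (eps delta : R) :
  0 < eps <= 1 -> 0 < delta <= 1 ->
  forall nA nS : nat,
  exists C : R, 0 < C /\
    forall (VA VS : finType), #|VA| = nA -> #|VS| = nS ->
    forall (d : measure_display) (T : measurableType d)
           (mu : {measure set T -> \bar R}),
    mu setT = 1%E ->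
    forall D D' : (VA + VS)%type -> set T,
    (forall v, measurable (D v)) -> (forall v, measurable (D' v)) ->
    granular mu D eps -> granular mu D' eps ->
    (forall p : sequent VA VS, inSdelta mu D delta p = inSdelta mu D' delta p) ->
    (barcode_dist mu D D' delta <= C%:E * data_dist mu D D')%E.
Proof.
move=> he hd nA nS; have [e0 d0] : 0 < eps /\ 0 < delta by case/andP: he; case/andP: hd.
pose N := (2 ^ nA * 2 ^ nS)%N.
exists ((N * N)%:R * (2 / (delta * eps))); split.
  by rewrite mulr_gt0 ?divr_gt0 ?mulr_gt0 // ltr0n !muln_gt0 !expn_gt0.
move=> VA VS cA cS d T mu mu1 D D' mD mD' gD gD' HS.
have cardN : #|{: sequent VA VS}| = N by rewrite card_sequent cA cS.
pose dd := fine (data_dist mu D D').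
have dd0 : 0 <= dd by rewrite fine_ge0 // sume_ge0.
pose k := (dd + dd) / (delta * eps).
have k0 : 0 <= k by rewrite divr_ge0 ?addr_ge0 // ltW ?mulr_gt0.
have Ip_le p : (lebesgue_measure (symdiff (Ip mu D delta p) (Ip mu D' delta p))
    <= (N%:R * k)%:E)%E.
  apply: le_trans (lebesgue_Ip_symdiff_le p HS) _; rewrite -cardN.
  apply: le_trans (sume_cst_le _ k0); apply: lee_sum => q Sq.
  by rewrite lee_fin; apply: dist_ratio_le; rewrite -?HS.
rewrite /barcode_dist.
apply: (@le_trans _ _ (\sum_(p | inSdelta mu D delta p) (N%:R * k)%:E)%E).
  by apply: lee_sum => p _; exact: Ip_le.
apply: le_trans (sume_cst_le _ (mulr_ge0 (ler0n _ _) k0)) _.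
rewrite cardN (data_dist_fine mu1 mD mD') -/dd -EFinM lee_fin.
suff -> : N%:R * (N%:R * k) = (N * N)%:R * (2 / (delta * eps)) * dd by [].
by rewrite /k natrM; field; rewrite !gt_eqF.
Qed.
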